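(* Let $1<A'<A<B$. There exists a constant $C>0$, depending only on $A,A',B$, such that the following holds: if $f\in(\mathscr{A}^{(B)})^n$ satisfies $\|f\|_B<C$, and $Y=X+f(X)$ (where $X=(X_1,\dots,X_n)$ is the tuple of generators) satisfies $\|Y\|_{A'}\le A$, then there exists $G\in(\mathscr{A}^{(A)})^n$ such that $X=G(Y)$ in $(\mathscr{A}^{(A')})^n$.
   Context: $\mathscr{A}=\mathbb{C}\langle X_1,\dots,X_n\rangle$ is the algebra of non-commutative polynomials. For a polynomial $P=\sum_q\lambda_q(P)q$ (sum over monomials $q$) and $A>1$, $\|P\|_A=\sum_q|\lambda_q(P)|A^{\deg q}$; $\mathscr{A}^{(A)}$ is the completion (Banach algebra of absolutely convergent non-commutative power series). For tuples, $\|G\|_A=\max_j\|G_j\|_A$. An element of $\mathscr{A}^{(A)}$ can be evaluated at any $n$-tuple of elements of a Banach algebra of norms at most $A$; in particular $G(Y)$ is defined in $\mathscr{A}^{(A')}$ when $\|Y_j\|_{A'}\le A$. *)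

From Stdlib Require Import Reals Lra List Arith.
Import ListNotations.
Open Scope R_scope.

Definition Cplx : Type := (R * R)%type.
Definition C0 : Cplx := (0, 0).
Definition C1 : Cplx := (1, 0).
Definition Cadd (a b : Cplx) : Cplx := (fst a + fst b, snd a + snd b).
Definition Csub (a b : Cplx) : Cplx := (fst a - fst b, snd a - snd b).
Definition Cmul (a b : Cplx) : Cplx :=
  (fst a * fst b - snd a * snd b, fst a * snd b + snd a * fst b).
Definition Cmod (a : Cplx) : R := sqrt (fst a * fst a + snd a * snd a).
Definition Csum (l : list Cplx) : Cplx := fold_right Cadd C0 l.

Definition Ccv (u : nat -> Cplx) (l : Cplx) : Prop :=
  Un_cv (fun k => Cmod (Csub (u k) l)) 0.

(** Non-commutative monomials in X_0..X_{n-1} are words (list nat) with letters < n.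
    A non-commutative formal power series is its coefficient function
    q |-> lambda_q(P); the series in A^(A) are supported on words in the n letters. *)
Definition ncseries : Type := list nat -> Cplx.

Fixpoint words (n k : nat) : list (list nat) :=
  match k with
  | O => [[]]
  | S k' => flat_map (fun i => map (cons i) (words n k')) (seq 0 n)
  end.

Definition supported (n : nat) (P : ncseries) : Prop :=
  forall w : list nat, ~ Forall (fun i => (i < n)%nat) w -> P w = C0.

(** Partial sums of ||P||_A = sum_q |lambda_q(P)| A^deg q, grouped by degree. *)
Definition deg_mass (n : nat) (P : ncseries) (k : nat) : R :=
  fold_right Rplus 0 (map (fun w => Cmod (P w)) (words n k)).

Definition norm_partial (n : nat) (A : R) (P : ncseries) (K : nat) : R :=
  sum_f_R0 (fun k => deg_mass n P k * A ^ k) K.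

(** ||P||_A <= c  (the norm is the supremum of the partial sums). *)
Definition norm_le (n : nat) (A : R) (P : ncseries) (c : R) : Prop :=
  forall K, norm_partial n A P K <= c.

Definition norm_lt (n : nat) (A : R) (P : ncseries) (c : R) : Prop :=
  exists c', c' < c /\ norm_le n A P c'.

Definition in_alg (n : nat) (A : R) (P : ncseries) : Prop :=
  supported n P /\ exists c, norm_le n A P c.

Definition sone : ncseries :=
  fun w => match w with [] => C1 | _ => C0 end.

Definition smul (P Q : ncseries) : ncseries :=
  fun w => Csum (map (fun i => Cmul (P (firstn i w)) (Q (skipn i w)))
                     (seq 0 (S (length w)))).

Definition Xgen (j : nat) : ncseries :=
  fun w => if list_eq_dec Nat.eq_dec w [j] then C1 else C0.

Definition sadd (P Q : ncseries) : ncseries := fun w => Cadd (P w) (Q w).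

Definition mono_eval (Y : nat -> ncseries) (q : list nat) : ncseries :=
  fold_right (fun i acc => smul (Y i) acc) sone q.

(** Coefficient at w of the degree-<=K partial sum of G(Y) = sum_q lambda_q(G) Y^q. *)
Definition eval_partial (n : nat) (G : ncseries) (Y : nat -> ncseries)
    (w : list nat) (K : nat) : Cplx :=
  Csum (map (fun k =>
          Csum (map (fun q => Cmul (G q) (mono_eval Y q w)) (words n k)))
        (seq 0 (S K))).

(** The inverse G is the fixed point of G = X - f(G).  We iterate
    G_0 = X, G_{m+1} = X - f(G_m), where f(G_m) is truncated at degree m.  With
    rho := (A + B) / 2 and theta := (3 + rho / B) / 4 < 1, every G_m has
    A-norm <= rho, and ||G_{m+1} - G_m||_A <= 4 C theta^m; hence (G_m) is
    Cauchy and has a coefficientwise limit G of finite A-norm.  Since G_m is a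
    polynomial, H_m := G_m(Y) is computed exactly, H_{m+1} = Y - f(H_m) by
    associativity of composition, and ||H_m - X||_{A'} <= 4 C theta^m because
    Y - f(X) = X.  Finally G(Y) - X = (G - G_m)(Y) + (H_m - X) is small in the
    A'-norm, coefficient by coefficient. *)

From Pilot Require Import Defs.
From Stdlib Require Import Reals List.
From Stdlib Require Import Lra Lia Arith Ring Field FunctionalExtensionality.
From Coquelicot Require Coquelicot.
Import ListNotations.
Open Scope R_scope.

Definition Copp (a : Cplx) : Cplx := (- fst a, - snd a).

(** [Cplx] is a commutative ring, so that [ring] normalizes complex identities. *)
Lemma Cring_theory : ring_theory Defs.C0 Defs.C1 Cadd Cmul Csub Copp (@eq Cplx).
Proof.
  constructor; intros; unfold Cadd, Cmul, Csub, Copp, Defs.C0, Defs.C1;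
  try (destruct x); try (destruct y); try (destruct z); simpl;
  f_equal; ring.
Qed.
Add Ring Cring : Cring_theory.

(** Our modulus is Coquelicot's, whose triangle inequality and
    multiplicativity we reuse. *)
Lemma Cmod_eq (a : Cplx) : Cmod a = Coquelicot.Complex.Cmod a.
Proof. unfold Cmod, Coquelicot.Complex.Cmod. f_equal. simpl. ring. Qed.

Lemma Cmod_ge0 a : 0 <= Cmod a.
Proof. unfold Cmod. apply sqrt_pos. Qed.

Lemma Cmod_add a b : Cmod (Cadd a b) <= Cmod a + Cmod b.
Proof. rewrite !Cmod_eq. apply Coquelicot.Complex.Cmod_triangle. Qed.

Lemma Cmod_mul a b : Cmod (Cmul a b) = Cmod a * Cmod b.
Proof. rewrite !Cmod_eq. apply Coquelicot.Complex.Cmod_mult. Qed.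

Lemma Cmod_C0 : Cmod Defs.C0 = 0.
Proof. unfold Cmod, Defs.C0; simpl. replace (0*0+0*0) with 0 by ring. apply sqrt_0. Qed.

Lemma Cmod_C1 : Cmod Defs.C1 = 1.
Proof. unfold Cmod, Defs.C1; simpl. replace (1*1+0*0) with 1 by ring. apply sqrt_1. Qed.

Lemma Cmod_opp a : Cmod (Copp a) = Cmod a.
Proof. unfold Cmod, Copp; simpl. f_equal. ring. Qed.

Lemma Cmod_sub_sym a b : Cmod (Csub a b) = Cmod (Csub b a).
Proof. replace (Csub a b) with (Copp (Csub b a)) by ring. apply Cmod_opp. Qed.

Lemma Cmod_diff a b : Rabs (Cmod a - Cmod b) <= Cmod (Csub a b).
Proof.
  apply Rabs_le; split.
  - assert (Hb : Cmod b <= Cmod a + Cmod (Csub b a)).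
    { replace b with (Cadd a (Csub b a)) at 1 by ring. apply Cmod_add. }
    rewrite Cmod_sub_sym in Hb. lra.
  - assert (Ha : Cmod a <= Cmod b + Cmod (Csub a b)).
    { replace a with (Cadd b (Csub a b)) at 1 by ring. apply Cmod_add. }
    lra.
Qed.

(** The modulus is equivalent to the l1 norm of the two coordinates; this
    reduces completeness of [Cplx] to that of [R]. *)
Lemma Cmod_fst a : Rabs (fst a) <= Cmod a.
Proof.
  unfold Cmod. rewrite <- sqrt_Rsqr_abs. apply sqrt_le_1_alt.
  unfold Rsqr. destruct a; simpl. nra.
Qed.

Lemma Cmod_snd a : Rabs (snd a) <= Cmod a.
Proof.
  unfold Cmod. rewrite <- sqrt_Rsqr_abs. apply sqrt_le_1_alt.
  unfold Rsqr. destruct a; simpl. nra.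
Qed.

Lemma Cmod_le_fst_snd a : Cmod a <= Rabs (fst a) + Rabs (snd a).
Proof.
  unfold Cmod. destruct a as [x y]; simpl.
  pose proof (Rabs_pos x); pose proof (Rabs_pos y).
  apply Rsqr_incr_0_var; [|lra].
  rewrite Rsqr_sqrt by nra. unfold Rsqr.
  assert (x * x = Rabs x * Rabs x) by (rewrite <- Rabs_mult, Rabs_right; nra).
  assert (y * y = Rabs y * Rabs y) by (rewrite <- Rabs_mult, Rabs_right; nra).
  nra.
Qed.

Lemma geometric_small (M th : R) : 0 < M -> 0 <= th < 1 ->
  forall eps, 0 < eps -> exists N, forall m, (N <= m)%nat -> M * th ^ m < eps.
Proof.
  intros HM Hth eps Heps.
  destruct (pow_lt_1_zero th ltac:(rewrite Rabs_right; lra) (eps / M)) as [N HN].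
  { apply Rdiv_lt_0_compat; lra. }
  exists N. intros m Hm. specialize (HN m Hm).
  rewrite Rabs_right in HN by (apply Rle_ge, pow_le; lra).
  apply (Rmult_lt_compat_l M) in HN; [|lra].
  replace (M * (eps / M)) with eps in HN by (field; lra). lra.
Qed.

Lemma Ccv_geometric_cauchy (u : nat -> Cplx) (M th : R) :
  0 < M -> 0 <= th < 1 ->
  (forall m p, (m <= p)%nat -> Cmod (Csub (u p) (u m)) <= M * th ^ m) ->
  {l : Cplx | Ccv u l}.
Proof.
  intros HM Hth Hu.
  assert (Hcoord : forall proj : Cplx -> R, (forall z, Rabs (proj z) <= Cmod z) ->
            (forall z1 z2, proj (Csub z1 z2) = proj z1 - proj z2) ->
            Cauchy_crit (fun m => proj (u m))).
  { intros proj Hp1 Hp2 eps Heps. destruct (geometric_small M th HM Hth eps Heps) as [N HN].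
    exists N. intros p q Hp Hq. unfold R_dist. rewrite <- Hp2.
    eapply Rle_lt_trans. apply Hp1.
    destruct (le_dec q p).
    - eapply Rle_lt_trans. apply Hu; auto. apply HN; lia.
    - rewrite Cmod_sub_sym. eapply Rle_lt_trans. apply Hu; lia. apply HN; lia. }
  destruct (R_complete _ (Hcoord fst Cmod_fst (fun _ _ => eq_refl))) as [l1 Hl1].
  destruct (R_complete _ (Hcoord snd Cmod_snd (fun _ _ => eq_refl))) as [l2 Hl2].
  exists (l1, l2). intros eps Heps.
  destruct (Hl1 (eps / 2)) as [N1 HN1]; [lra|]. destruct (Hl2 (eps / 2)) as [N2 HN2]; [lra|].
  exists (max N1 N2). intros p Hp. unfold R_dist.
  rewrite Rminus_0_r, Rabs_right by (apply Rle_ge, Cmod_ge0).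
  eapply Rle_lt_trans. apply Cmod_le_fst_snd. simpl.
  specialize (HN1 p ltac:(lia)). specialize (HN2 p ltac:(lia)). unfold R_dist in *. lra.
Qed.

Lemma Ccv_geometric_bound (u : nat -> Cplx) (l : Cplx) (M th : R) :
  0 < M -> 0 <= th < 1 ->
  (forall m, exists N, forall K, (N <= K)%nat -> Cmod (Csub (u K) l) <= M * th ^ m) ->
  Ccv u l.
Proof.
  intros HM Hth Hu eps Heps.
  destruct (geometric_small M th HM Hth eps Heps) as [m Hm].
  destruct (Hu m) as [N HN]. exists N. intros K HK. unfold R_dist.
  rewrite Rminus_0_r, Rabs_right by (apply Rle_ge, Cmod_ge0).
  eapply Rle_lt_trans. apply HN; lia. apply Hm; lia.
Qed.

(** ** The algebra of formal series *)

Definition szero : ncseries := fun _ => Defs.C0.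
Definition sscale (c : Cplx) (P : ncseries) : ncseries := fun w => Cmul c (P w).
Definition ssub (P Q : ncseries) : ncseries := fun w => Csub (P w) (Q w).

(** Left derivative by the letter [a]: the coefficient of u in [shift a P] is
    that of a u in P.  Every series is P = P([]) + sum_a X_a (shift a P), which
    drives all the recursive definitions below. *)
Definition shift (a : nat) (P : ncseries) : ncseries := fun u => P (a :: u).

Fixpoint sumS (l : list nat) (F : nat -> ncseries) : ncseries :=
  match l with [] => szero | a :: l' => sadd (F a) (sumS l' F) end.

Ltac sext := let w := fresh "w" in apply functional_extensionality; intro w.

Lemma smul_nil P Q : smul P Q [] = Cmul (P []) (Q []).
Proof. unfold smul; simpl. ring. Qed.

Lemma smul_cons P Q a w :
  smul P Q (a :: w) = Cadd (Cmul (P []) (Q (a :: w))) (smul (shift a P) Q w).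
Proof.
  unfold smul. simpl length.
  change (seq 0 (S (S (length w)))) with (0%nat :: seq 1 (S (length w)))%nat.
  rewrite <- seq_shift, map_cons, map_map. simpl. reflexivity.
Qed.

Lemma shift_smul a P Q :
  shift a (smul P Q) = sadd (sscale (P []) (shift a Q)) (smul (shift a P) Q).
Proof. sext. unfold shift at 1. rewrite smul_cons. reflexivity. Qed.

Lemma shift_sadd a P Q : shift a (sadd P Q) = sadd (shift a P) (shift a Q).
Proof. reflexivity. Qed.
Lemma shift_ssub a P Q : shift a (ssub P Q) = ssub (shift a P) (shift a Q).
Proof. reflexivity. Qed.
Lemma shift_sscale a c P : shift a (sscale c P) = sscale c (shift a P).
Proof. reflexivity. Qed.
Lemma shift_szero a : shift a szero = szero.
Proof. reflexivity. Qed.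
Lemma shift_sone a : shift a sone = szero.
Proof. reflexivity. Qed.
Lemma shift_sumS a l F : shift a (sumS l F) = sumS l (fun b => shift a (F b)).
Proof. induction l; simpl; auto. rewrite shift_sadd, IHl. reflexivity. Qed.
Lemma shift_Xgen a j : shift a (Xgen j) = if Nat.eq_dec a j then sone else szero.
Proof.
  sext. unfold shift, Xgen, sone, szero.
  destruct (Nat.eq_dec a j); destruct (list_eq_dec Nat.eq_dec (a :: w) [j]);
    destruct w; try congruence; subst; auto.
Qed.

Lemma smul_addl P Q R : smul (sadd P Q) R = sadd (smul P R) (smul Q R).
Proof.
  sext. revert P Q. induction w; intros.
  - unfold sadd at 1. rewrite !smul_nil. unfold sadd. rewrite !smul_nil. ring.
  - rewrite smul_cons, shift_sadd, IHw. unfold sadd. rewrite !smul_cons. ring.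
Qed.
Lemma smul_addr P Q R : smul P (sadd Q R) = sadd (smul P Q) (smul P R).
Proof.
  sext. revert P. induction w; intros.
  - unfold sadd at 1. rewrite !smul_nil. unfold sadd. rewrite !smul_nil. ring.
  - rewrite smul_cons, IHw. unfold sadd. rewrite !smul_cons. ring.
Qed.
Lemma smul_scalel c P R : smul (sscale c P) R = sscale c (smul P R).
Proof.
  sext. revert P. induction w; intros.
  - unfold sscale at 1. rewrite !smul_nil. unfold sscale. rewrite !smul_nil. ring.
  - rewrite smul_cons, shift_sscale, IHw. unfold sscale. rewrite !smul_cons. ring.
Qed.
Lemma smul_scaler c P R : smul P (sscale c R) = sscale c (smul P R).
Proof.
  sext. revert P. induction w; intros.
  - unfold sscale at 1. rewrite !smul_nil. unfold sscale. rewrite !smul_nil. ring.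
  - rewrite smul_cons, IHw. unfold sscale. rewrite !smul_cons. ring.
Qed.
Lemma smul_zerol R : smul szero R = szero.
Proof.
  sext. induction w.
  - rewrite smul_nil. unfold szero. ring.
  - rewrite smul_cons, shift_szero, IHw. unfold szero. ring.
Qed.
Lemma smul_zeror P : smul P szero = szero.
Proof.
  sext. revert P; induction w; intros.
  - rewrite smul_nil. unfold szero. ring.
  - rewrite smul_cons, IHw. unfold szero. ring.
Qed.
Lemma smul_onel R : smul sone R = R.
Proof.
  sext. destruct w.
  - rewrite smul_nil. simpl. ring.
  - rewrite smul_cons, shift_sone, smul_zerol. simpl. unfold szero. ring.
Qed.
Lemma smul_oner P : smul P sone = P.
Proof.
  sext. revert P; induction w; intros.
  - rewrite smul_nil. simpl. ring.
  - rewrite smul_cons, IHw. simpl. unfold shift. ring.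
Qed.
Lemma smul_assoc P Q R : smul (smul P Q) R = smul P (smul Q R).
Proof.
  sext. revert P Q. induction w; intros.
  - rewrite !smul_nil. ring.
  - rewrite smul_cons, shift_smul, smul_addl, smul_scalel. unfold sadd at 1.
    rewrite IHw, smul_nil, (smul_cons P), (smul_cons Q).
    unfold sadd, sscale. ring.
Qed.

Lemma ssub_as_sadd P Q : ssub P Q = sadd P (sscale (Copp Defs.C1) Q).
Proof. sext. unfold sadd, sscale, ssub. ring. Qed.

Lemma smul_subl P Q R : smul (ssub P Q) R = ssub (smul P R) (smul Q R).
Proof.
  rewrite ssub_as_sadd, smul_addl, smul_scalel, ssub_as_sadd. reflexivity.
Qed.
Lemma smul_subr P Q R : smul P (ssub Q R) = ssub (smul P Q) (smul P R).
Proof.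
  rewrite ssub_as_sadd, smul_addr, smul_scaler, ssub_as_sadd. reflexivity.
Qed.
Lemma smul_sumSl l F R : smul (sumS l F) R = sumS l (fun a => smul (F a) R).
Proof. induction l; simpl. apply smul_zerol. rewrite smul_addl, IHl. reflexivity. Qed.

Lemma sumS_ext l F G : (forall a, In a l -> F a = G a) -> sumS l F = sumS l G.
Proof.
  induction l; simpl; intros; auto. rewrite H by auto. rewrite IHl; auto.
Qed.
Lemma sumS_add l F G : sumS l (fun a => sadd (F a) (G a)) = sadd (sumS l F) (sumS l G).
Proof.
  induction l; simpl. sext; unfold sadd, szero; ring.
  rewrite IHl. sext; unfold sadd; ring.
Qed.
Lemma sumS_sub l F G : sumS l (fun a => ssub (F a) (G a)) = ssub (sumS l F) (sumS l G).
Proof.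
  induction l; simpl. sext; unfold ssub, szero; ring.
  rewrite IHl. sext; unfold ssub, sadd; ring.
Qed.
Lemma sumS_scale l c F : sumS l (fun a => sscale c (F a)) = sscale c (sumS l F).
Proof.
  induction l; simpl. sext; unfold sscale, szero; ring.
  rewrite IHl. sext; unfold sscale, sadd; ring.
Qed.
Lemma sumS_zero l : sumS l (fun _ => szero) = szero.
Proof. induction l; simpl; auto. rewrite IHl. sext; unfold sadd, szero; ring. Qed.

Lemma sumS_delta n j F : (j < n)%nat ->
  sumS (seq 0 n) (fun a => if Nat.eq_dec a j then F a else szero) = F j.
Proof.
  intros Hj.
  assert (Hl : forall l, NoDup l -> In j l ->
    sumS l (fun a => if Nat.eq_dec a j then F a else szero) = F j).
  { induction l; simpl; intros Hnd Hin. contradiction.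
    inversion Hnd; subst. destruct (Nat.eq_dec a j).
    - subst. rewrite sumS_ext with (G := fun _ => szero).
      + rewrite sumS_zero. sext; unfold sadd, szero; ring.
      + intros b Hb. destruct (Nat.eq_dec b j); subst; auto. contradiction.
    - destruct Hin. congruence. rewrite IHl; auto. sext; unfold sadd, szero; ring. }
  apply Hl. apply seq_NoDup. apply in_seq. lia.
Qed.

Fixpoint sumR (l : list nat) (F : nat -> R) : R :=
  match l with [] => 0 | a :: l' => F a + sumR l' F end.

Lemma sumR_le l F G : (forall a, In a l -> F a <= G a) -> sumR l F <= sumR l G.
Proof.
  induction l; simpl; intros H; [lra|].
  pose proof (H a (or_introl eq_refl)). assert (sumR l F <= sumR l G) by auto. lra.
Qed.
Lemma sumR_ext l F G : (forall a, In a l -> F a = G a) -> sumR l F = sumR l G.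
Proof. induction l; simpl; intros; auto. rewrite H, IHl; auto. Qed.
Lemma sumR_nonneg l F : (forall a, In a l -> 0 <= F a) -> 0 <= sumR l F.
Proof.
  induction l; simpl; intros H; [lra|].
  pose proof (H a (or_introl eq_refl)). assert (0 <= sumR l F) by auto. lra.
Qed.
Lemma sumR_add l F G : sumR l (fun a => F a + G a) = sumR l F + sumR l G.
Proof. induction l; simpl; [lra|]. rewrite IHl. lra. Qed.
Lemma sumR_sub l F G : sumR l (fun a => F a - G a) = sumR l F - sumR l G.
Proof. induction l; simpl; [lra|]. rewrite IHl. lra. Qed.
Lemma sumR_scale l c F : sumR l (fun a => c * F a) = c * sumR l F.
Proof. induction l; simpl; [lra|]. rewrite IHl. lra. Qed.
Lemma sumR_zero l : sumR l (fun _ => 0) = 0.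
Proof. induction l; simpl; lra. Qed.
Lemma sumR_single l F a : In a l -> (forall b, In b l -> 0 <= F b) -> F a <= sumR l F.
Proof.
  induction l; simpl; intros Hin Hnn. contradiction.
  assert (0 <= sumR l F) by (apply sumR_nonneg; auto).
  destruct Hin. subst. lra.
  assert (F a <= sumR l F) by (apply IHl; auto). pose proof (Hnn a0 (or_introl eq_refl)). lra.
Qed.
Lemma sumR_delta n j F : (j < n)%nat ->
  sumR (seq 0 n) (fun a => if Nat.eq_dec a j then F a else 0) = F j.
Proof.
  intros Hj.
  assert (Hl : forall l, NoDup l -> In j l ->
    sumR l (fun a => if Nat.eq_dec a j then F a else 0) = F j).
  { induction l; simpl; intros Hnd Hin. contradiction.
    inversion Hnd; subst. destruct (Nat.eq_dec a j).
    - subst. rewrite sumR_ext with (G := fun _ => 0), sumR_zero. lra.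
      intros b Hb. destruct (Nat.eq_dec b j); subst; auto. contradiction.
    - destruct Hin. congruence. rewrite IHl; auto. lra. }
  apply Hl. apply seq_NoDup. apply in_seq. lia.
Qed.

(** ** Degree-truncated weighted norms *)

Section Norms.
Variable n : nat.

(** [wnorm r K P] is the truncation at degree K of
    ||P||_r = sum_w |P w| r^|w| over words in the n letters, computed through
    the decomposition P = P([]) + sum_a X_a (shift a P). *)
Fixpoint wnorm (r : R) (K : nat) (P : ncseries) : R :=
  match K with
  | O => Cmod (P [])
  | S K' => Cmod (P []) + r * sumR (seq 0 n) (fun a => wnorm r K' (shift a P))
  end.

Lemma wnorm_nonneg r K P : 0 <= r -> 0 <= wnorm r K P.
Proof.
  revert P; induction K; intros; simpl. apply Cmod_ge0.
  pose proof (Cmod_ge0 (P [])).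
  assert (0 <= sumR (seq 0 n) (fun a => wnorm r K (shift a P))) by
    (apply sumR_nonneg; intros; auto).
  nra.
Qed.

Lemma wnorm_shifts_nonneg r K P :
  0 <= r -> 0 <= sumR (seq 0 n) (fun a => wnorm r K (shift a P)).
Proof. intros. apply sumR_nonneg; intros; apply wnorm_nonneg; auto. Qed.

Lemma wnorm_head r K P : 0 <= r -> Cmod (P []) <= wnorm r K P.
Proof.
  destruct K; simpl; intros. lra.
  pose proof (wnorm_shifts_nonneg r K P H). nra.
Qed.

Lemma wnorm_add r K P Q : 0 <= r -> wnorm r K (sadd P Q) <= wnorm r K P + wnorm r K Q.
Proof.
  intro Hr. revert P Q; induction K; intros; simpl; unfold sadd at 1.
  apply Cmod_add.
  pose proof (Cmod_add (P []) (Q [])).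
  assert (sumR (seq 0 n) (fun a => wnorm r K (shift a (sadd P Q))) <=
          sumR (seq 0 n) (fun a => wnorm r K (shift a P))
          + sumR (seq 0 n) (fun a => wnorm r K (shift a Q))).
  { rewrite <- sumR_add. apply sumR_le. intros. rewrite shift_sadd. apply IHK. }
  nra.
Qed.

Lemma wnorm_scale r K c P : wnorm r K (sscale c P) = Cmod c * wnorm r K P.
Proof.
  revert P; induction K; intros; simpl; unfold sscale at 1; rewrite Cmod_mul. auto.
  rewrite (sumR_ext _ _ (fun a => Cmod c * wnorm r K (shift a P))).
  - rewrite sumR_scale. ring.
  - intros. rewrite shift_sscale. auto.
Qed.

Lemma wnorm_sub r K P Q : 0 <= r -> wnorm r K (ssub P Q) <= wnorm r K P + wnorm r K Q.
Proof.
  intros. rewrite ssub_as_sadd.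
  rewrite <- (Rmult_1_l (wnorm r K Q)), <- Cmod_C1, <- (Cmod_opp Defs.C1), <- wnorm_scale.
  apply wnorm_add; auto.
Qed.

Lemma wnorm_sub_sym r K P Q : wnorm r K (ssub P Q) = wnorm r K (ssub Q P).
Proof.
  replace (ssub P Q) with (sscale (Copp Defs.C1) (ssub Q P))
    by (sext; unfold ssub, sscale; ring).
  rewrite wnorm_scale, Cmod_opp, Cmod_C1. ring.
Qed.

Lemma wnorm_tri r K P Q S : 0 <= r ->
  wnorm r K (ssub P S) <= wnorm r K (ssub P Q) + wnorm r K (ssub Q S).
Proof.
  intros. replace (ssub P S) with (sadd (ssub P Q) (ssub Q S))
    by (sext; unfold sadd, ssub; ring).
  apply wnorm_add; auto.
Qed.

Lemma wnorm_zero r K : wnorm r K szero = 0.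
Proof.
  induction K; simpl; unfold szero at 1; rewrite Cmod_C0. auto.
  rewrite (sumR_ext _ _ (fun _ => 0)), sumR_zero. ring.
  intros. rewrite shift_szero. auto.
Qed.

Lemma wnorm_sone r K : wnorm r K sone = 1.
Proof.
  destruct K; simpl; rewrite Cmod_C1. auto.
  rewrite (sumR_ext _ _ (fun _ => 0)), sumR_zero. ring.
  intros. rewrite shift_sone. apply wnorm_zero.
Qed.

Lemma wnorm_sscale_sone r K c : wnorm r K (sscale c sone) = Cmod c.
Proof. rewrite wnorm_scale, wnorm_sone. ring. Qed.

Lemma wnorm_Xgen r K j : 0 <= r -> (j < n)%nat -> wnorm r K (Xgen j) <= r.
Proof.
  intros. destruct K; simpl.
  - unfold Xgen; simpl. rewrite Cmod_C0. auto.
  - unfold Xgen at 1; simpl. rewrite Cmod_C0.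
    rewrite (sumR_ext _ _ (fun a => if Nat.eq_dec a j then 1 else 0)).
    + rewrite (sumR_delta n j (fun _ => 1)); auto. lra.
    + intros. rewrite shift_Xgen.
      destruct (Nat.eq_dec a j). apply wnorm_sone. apply wnorm_zero.
Qed.

Lemma wnorm_sumS r K l F : 0 <= r -> wnorm r K (sumS l F) <= sumR l (fun a => wnorm r K (F a)).
Proof.
  intros; induction l; simpl. rewrite wnorm_zero; lra.
  pose proof (wnorm_add r K (F a) (sumS l F) H). lra.
Qed.

Lemma wnorm_mono_K r K P : 0 <= r -> wnorm r K P <= wnorm r (S K) P.
Proof.
  intro Hr. revert P; induction K; intros.
  - simpl. assert (0 <= sumR (seq 0 n) (fun a => Cmod (shift a P []))) by
      (apply sumR_nonneg; intros; apply Cmod_ge0). nra.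
  - change (wnorm r (S K) P) with
      (Cmod (P []) + r * sumR (seq 0 n) (fun a => wnorm r K (shift a P))).
    change (wnorm r (S (S K)) P) with
      (Cmod (P []) + r * sumR (seq 0 n) (fun a => wnorm r (S K) (shift a P))).
    assert (sumR (seq 0 n) (fun a => wnorm r K (shift a P))
            <= sumR (seq 0 n) (fun a => wnorm r (S K) (shift a P)))
      by (apply sumR_le; auto). nra.
Qed.

Lemma wnorm_mono_r r r' K P : 0 <= r -> r <= r' -> wnorm r K P <= wnorm r' K P.
Proof.
  intros. revert P; induction K; intros; simpl. lra.
  assert (sumR (seq 0 n) (fun a => wnorm r K (shift a P))
          <= sumR (seq 0 n) (fun a => wnorm r' K (shift a P)))
    by (apply sumR_le; auto).
  pose proof (wnorm_shifts_nonneg r K P H). nra.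
Qed.

Lemma wnorm_mul r K P Q : 0 <= r -> wnorm r K (smul P Q) <= wnorm r K P * wnorm r K Q.
Proof.
  intro Hr. revert P Q; induction K; intros; simpl.
  - rewrite smul_nil, Cmod_mul. lra.
  - rewrite smul_nil, Cmod_mul.
    set (SQ := sumR (seq 0 n) (fun a => wnorm r K (shift a Q))).
    set (SP := sumR (seq 0 n) (fun a => wnorm r K (shift a P))).
    assert (Hs : sumR (seq 0 n) (fun a => wnorm r K (shift a (smul P Q))) <=
      Cmod (P []) * SQ + SP * (Cmod (Q []) + r * SQ)).
    { unfold SQ, SP. rewrite <- sumR_scale.
      rewrite Rmult_comm, <- sumR_scale, <- sumR_add.
      apply sumR_le; intros. rewrite shift_smul.
      eapply Rle_trans. apply wnorm_add; auto. rewrite wnorm_scale.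
      pose proof (IHK (shift a P) Q) as Hind.
      pose proof (wnorm_mono_K r K Q Hr) as HQ. simpl in HQ.
      pose proof (wnorm_nonneg r K (shift a P) Hr). nra. }
    pose proof (Cmod_ge0 (P [])). pose proof (Cmod_ge0 (Q [])).
    pose proof (wnorm_shifts_nonneg r K Q Hr) as HSQ.
    pose proof (wnorm_shifts_nonneg r K P Hr) as HSP.
    fold SQ in HSQ. fold SP in HSP. nra.
Qed.

Definition in_alphabet (w : list nat) : bool := forallb (fun i => Nat.ltb i n) w.

Lemma in_alphabet_Forall w : in_alphabet w = true <-> Forall (fun i => (i < n)%nat) w.
Proof.
  unfold in_alphabet. rewrite forallb_forall, Forall_forall.
  split; intros H x Hx; specialize (H x Hx); apply Nat.ltb_lt; auto.
Qed.

Lemma wnorm_coef r K P w : 1 <= r -> in_alphabet w = true -> (length w <= K)%nat ->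
  Cmod (P w) <= wnorm r K P.
Proof.
  intros Hr. revert K P; induction w; intros K P Hg Hl.
  - apply wnorm_head; lra.
  - destruct K. simpl in Hl; lia.
    simpl in Hg. apply andb_prop in Hg as [Ha Hg]. apply Nat.ltb_lt in Ha.
    simpl. change (P (a :: w)) with (shift a P w).
    assert (Cmod (shift a P w) <= wnorm r K (shift a P)) by (apply IHw; auto; simpl in Hl; lia).
    assert (wnorm r K (shift a P) <= sumR (seq 0 n) (fun b => wnorm r K (shift b P))).
    { apply (sumR_single _ (fun b => wnorm r K (shift b P))). apply in_seq; lia.
      intros; apply wnorm_nonneg; lra. }
    pose proof (Cmod_ge0 (P [])). pose proof (Cmod_ge0 (shift a P w)). nra.
Qed.

Lemma sum_map_app {T} (g : T -> R) l1 l2 :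
  fold_right Rplus 0 (map g (l1 ++ l2))
  = fold_right Rplus 0 (map g l1) + fold_right Rplus 0 (map g l2).
Proof. induction l1; simpl; [lra|]. rewrite IHl1. lra. Qed.

Lemma deg_mass_S P k :
  deg_mass n P (S k) = sumR (seq 0 n) (fun a => deg_mass n (shift a P) k).
Proof.
  unfold deg_mass. simpl. generalize (seq 0 n). induction l; simpl; auto.
  rewrite sum_map_app, IHl, map_map. reflexivity.
Qed.

Lemma sum_f_sumR l F K :
  sum_f_R0 (fun k => sumR l (fun a => F k a)) K
  = sumR l (fun a => sum_f_R0 (fun k => F k a) K).
Proof. induction K; simpl; auto. rewrite IHK, <- sumR_add. reflexivity. Qed.

Lemma norm_partial_wnorm r P K : norm_partial n r P K = wnorm r K P.
Proof.
  unfold norm_partial. revert P; induction K; intros.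
  - simpl. unfold deg_mass; simpl. ring.
  - rewrite decomp_sum by lia. simpl pred.
    transitivity (Cmod (P []) + r * sumR (seq 0 n)
                   (fun a => sum_f_R0 (fun k => deg_mass n (shift a P) k * r ^ k) K)).
    + f_equal. unfold deg_mass; simpl; ring.
      rewrite <- sum_f_sumR, (scal_sum _ K r).
      apply sum_eq. intros. rewrite deg_mass_S.
      rewrite (Rmult_comm _ r), (Rmult_comm _ (r ^ S i)), <- !sumR_scale.
      apply sumR_ext. intros. simpl. ring.
    + simpl. f_equal. f_equal. apply sumR_ext. intros. apply IHK.
Qed.

End Norms.

(** ** Truncated composition *)

Section Composition.
Variable n : nat.

(** [tcomp N P Z] is P(Z) = sum_w P(w) Z^w restricted to words of length
    <= N, computed by the Horner scheme P(Z) = P([]) + sum_a Z_a (shift a P)(Z). *)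
Fixpoint tcomp (N : nat) (P : ncseries) (Z : nat -> ncseries) : ncseries :=
  match N with
  | O => sscale (P []) sone
  | S N' => sadd (sscale (P []) sone)
             (sumS (seq 0 n) (fun a => smul (Z a) (tcomp N' (shift a P) Z)))
  end.

Lemma tcomp_ext_Z N P Z Z' : (forall a, (a < n)%nat -> Z a = Z' a) ->
  tcomp N P Z = tcomp N P Z'.
Proof.
  intros H; revert P; induction N; intros; simpl; auto.
  f_equal. apply sumS_ext. intros a Ha. apply in_seq in Ha. rewrite H by lia.
  rewrite IHN. reflexivity.
Qed.

Lemma tcomp_add N P Q Z : tcomp N (sadd P Q) Z = sadd (tcomp N P Z) (tcomp N Q Z).
Proof.
  revert P Q; induction N; intros; simpl.
  - sext. unfold sadd, sscale. ring.
  - rewrite (sumS_ext _ _ (fun a => sadd (smul (Z a) (tcomp N (shift a P) Z))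
                                         (smul (Z a) (tcomp N (shift a Q) Z)))).
    + rewrite sumS_add. sext. unfold sadd, sscale. ring.
    + intros. rewrite shift_sadd, IHN, smul_addr. reflexivity.
Qed.

Lemma tcomp_scale N c P Z : tcomp N (sscale c P) Z = sscale c (tcomp N P Z).
Proof.
  revert P; induction N; intros; simpl.
  - sext. unfold sscale. ring.
  - rewrite (sumS_ext _ _ (fun a => sscale c (smul (Z a) (tcomp N (shift a P) Z)))).
    + rewrite sumS_scale. sext. unfold sadd, sscale. ring.
    + intros. rewrite shift_sscale, IHN, smul_scaler. reflexivity.
Qed.

Lemma tcomp_zero N Z : tcomp N szero Z = szero.
Proof.
  replace szero with (sscale Defs.C0 szero) at 1 by (sext; unfold sscale, szero; ring).
  rewrite tcomp_scale. sext. unfold sscale, szero. ring.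
Qed.

Lemma tcomp_sub N P Q Z : tcomp N (ssub P Q) Z = ssub (tcomp N P Z) (tcomp N Q Z).
Proof. rewrite !ssub_as_sadd, tcomp_add, tcomp_scale. reflexivity. Qed.

Lemma tcomp_sumS N l F Z : tcomp N (sumS l F) Z = sumS l (fun a => tcomp N (F a) Z).
Proof. induction l; simpl. apply tcomp_zero. rewrite tcomp_add, IHl. reflexivity. Qed.

Lemma tcomp_sone N Z : tcomp N sone Z = sone.
Proof.
  destruct N; simpl.
  - sext. unfold sscale. simpl. ring.
  - rewrite (sumS_ext _ _ (fun _ => szero)), sumS_zero.
    + sext. unfold sadd, sscale, szero. simpl. ring.
    + intros. rewrite shift_sone, tcomp_zero, smul_zeror. reflexivity.
Qed.

Lemma tcomp_Xgen N j Z : (j < n)%nat -> tcomp (S N) (Xgen j) Z = Z j.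
Proof.
  intros Hj. simpl.
  rewrite (sumS_ext _ _ (fun a => if Nat.eq_dec a j then Z a else szero)).
  - rewrite sumS_delta by auto. sext. unfold sadd, sscale, Xgen. simpl. ring.
  - intros. rewrite shift_Xgen. destruct (Nat.eq_dec a j).
    + rewrite tcomp_sone, smul_oner. auto.
    + rewrite tcomp_zero, smul_zeror. auto.
Qed.

Definition deg_le (d : nat) (P : ncseries) : Prop :=
  forall w, (d < length w)%nat -> P w = Defs.C0.

Lemma deg_le_mono d d' P : (d <= d')%nat -> deg_le d P -> deg_le d' P.
Proof. unfold deg_le; intros; apply H0; lia. Qed.
Lemma deg_le_shift d a P : deg_le (S d) P -> deg_le d (shift a P).
Proof. unfold deg_le, shift; intros; apply H; simpl; lia. Qed.
Lemma deg_le0_shift a P : deg_le 0 P -> shift a P = szero.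
Proof. unfold deg_le, shift; intros; sext; apply H; simpl; lia. Qed.
Lemma deg_le_add d P Q : deg_le d P -> deg_le d Q -> deg_le d (sadd P Q).
Proof. unfold deg_le, sadd; intros. rewrite H, H0 by auto. ring. Qed.
Lemma deg_le_sub d P Q : deg_le d P -> deg_le d Q -> deg_le d (ssub P Q).
Proof. unfold deg_le, ssub; intros. rewrite H, H0 by auto. ring. Qed.
Lemma deg_le_scale d c P : deg_le d P -> deg_le d (sscale c P).
Proof. unfold deg_le, sscale; intros. rewrite H by auto. ring. Qed.
Lemma deg_le_szero d : deg_le d szero.
Proof. unfold deg_le; auto. Qed.
Lemma deg_le_sone d : deg_le d sone.
Proof. unfold deg_le, sone; intros. destruct w; simpl in *; auto. lia. Qed.
Lemma deg_le_Xgen j : deg_le 1 (Xgen j).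
Proof.
  unfold deg_le, Xgen; intros.
  destruct (list_eq_dec Nat.eq_dec w [j]); auto. subst; simpl in H; lia.
Qed.
Lemma deg_le_sumS d l F : (forall a, In a l -> deg_le d (F a)) -> deg_le d (sumS l F).
Proof. induction l; simpl; intros. apply deg_le_szero. apply deg_le_add; auto. Qed.

Lemma deg_le_smul p q P Q : deg_le p P -> deg_le q Q -> deg_le (p + q) (smul P Q).
Proof.
  intros HP HQ w. revert p P HP. induction w; intros p P HP Hl.
  - simpl in Hl; lia.
  - rewrite smul_cons. destruct p.
    + rewrite deg_le0_shift, smul_zerol by auto.
      rewrite HQ by (simpl in *; lia). unfold szero. ring.
    + rewrite (IHw p (shift a P)); [| apply deg_le_shift; auto | simpl in Hl; lia].
      destruct (Nat.lt_ge_cases q (length (a :: w))).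
      * rewrite HQ by auto. ring.
      * simpl in *. lia.
Qed.

Lemma deg_le_tcomp N P Z d : (forall a, (a < n)%nat -> deg_le d (Z a)) ->
  deg_le (N * d) (tcomp N P Z).
Proof.
  intros HZ; revert P; induction N; intros; simpl.
  - apply deg_le_scale, deg_le_sone.
  - apply deg_le_add. apply deg_le_scale, deg_le_sone.
    apply deg_le_sumS; intros. apply in_seq in H. apply deg_le_smul; auto. apply HZ; lia.
Qed.

Section ExactComposition.
Variable Y : nat -> ncseries.

Lemma tcomp_stab1 D P : deg_le D P -> tcomp (S D) P Y = tcomp D P Y.
Proof.
  revert P; induction D; intros P HP.
  - change (tcomp 1 P Y) with (sadd (sscale (P []) sone)
      (sumS (seq 0 n) (fun a => smul (Y a) (tcomp 0 (shift a P) Y)))).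
    rewrite (sumS_ext _ _ (fun _ => szero)), sumS_zero.
    + sext; unfold sadd, szero; simpl; ring.
    + intros. rewrite deg_le0_shift, tcomp_zero, smul_zeror by auto. auto.
  - change (tcomp (S (S D)) P Y) with (sadd (sscale (P []) sone)
      (sumS (seq 0 n) (fun a => smul (Y a) (tcomp (S D) (shift a P) Y)))).
    change (tcomp (S D) P Y) with (sadd (sscale (P []) sone)
      (sumS (seq 0 n) (fun a => smul (Y a) (tcomp D (shift a P) Y)))).
    f_equal. apply sumS_ext; intros. rewrite IHD; auto. apply deg_le_shift; auto.
Qed.

Lemma tcomp_stab d D P : deg_le d P -> (d <= D)%nat -> tcomp D P Y = tcomp d P Y.
Proof.
  intros Hd HD. induction HD; auto. rewrite tcomp_stab1; auto.
  eapply deg_le_mono; eauto.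
Qed.

Lemma tcomp_mul D p q P Q : deg_le p P -> deg_le q Q -> (p + q <= D)%nat ->
  tcomp D (smul P Q) Y = smul (tcomp D P Y) (tcomp D Q Y).
Proof.
  revert p q P Q; induction D; intros p q P Q HP HQ HD.
  - simpl. rewrite smul_scalel, smul_scaler, smul_onel, smul_nil.
    sext. unfold sscale. ring.
  - assert (Hshift : forall a, tcomp D (smul (shift a P) Q) Y =
             smul (tcomp D (shift a P) Y) (tcomp (S D) Q Y)).
    { intros a. destruct p.
      - rewrite deg_le0_shift by auto. rewrite smul_zerol, tcomp_zero, smul_zerol. auto.
      - rewrite (IHD p q); [| apply deg_le_shift; auto | auto | lia].
        rewrite (tcomp_stab1 D Q). auto. apply (deg_le_mono q); [lia|auto]. }
    set (CQ := tcomp (S D) Q Y).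
    change (tcomp (S D) (smul P Q) Y) with (sadd (sscale (smul P Q []) sone)
      (sumS (seq 0 n) (fun a => smul (Y a) (tcomp D (shift a (smul P Q)) Y)))).
    change (tcomp (S D) P Y) with (sadd (sscale (P []) sone)
      (sumS (seq 0 n) (fun a => smul (Y a) (tcomp D (shift a P) Y)))).
    rewrite (sumS_ext _ _ (fun a => sadd (sscale (P []) (smul (Y a) (tcomp D (shift a Q) Y)))
                                        (smul (Y a) (smul (tcomp D (shift a P) Y) CQ)))).
    2:{ intros. rewrite shift_smul, tcomp_add, tcomp_scale, Hshift, smul_addr, smul_scaler.
        reflexivity. }
    rewrite sumS_add, sumS_scale, smul_addl, smul_scalel, smul_onel, smul_sumSl.
    rewrite (sumS_ext _ (fun a => smul (smul (Y a) (tcomp D (shift a P) Y)) CQ)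
                        (fun a => smul (Y a) (smul (tcomp D (shift a P) Y) CQ))).
    2:{ intros; apply smul_assoc. }
    rewrite smul_nil.
    unfold CQ at 2. change (tcomp (S D) Q Y) with (sadd (sscale (Q []) sone)
      (sumS (seq 0 n) (fun a => smul (Y a) (tcomp D (shift a Q) Y)))).
    sext. unfold sadd, sscale. ring.
Qed.

Lemma tcomp_assoc N P Z d D : (forall a, (a < n)%nat -> deg_le d (Z a)) -> (N * d <= D)%nat ->
  tcomp D (tcomp N P Z) Y = tcomp N P (fun a => tcomp D (Z a) Y).
Proof.
  intros HZ. revert P; induction N; intros P HD; simpl.
  - rewrite tcomp_scale, tcomp_sone. auto.
  - rewrite tcomp_add, tcomp_scale, tcomp_sone, tcomp_sumS. f_equal.
    apply sumS_ext; intros a Ha. apply in_seq in Ha.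
    rewrite (tcomp_mul D d (N * d)).
    + rewrite IHN; auto. simpl in HD; lia.
    + apply HZ; lia.
    + apply deg_le_tcomp; auto.
    + simpl in HD; lia.
Qed.

End ExactComposition.
End Composition.

(** ** Norm estimates for truncated composition *)

Section Estimates.
Variable n : nat.

Lemma tcomp_norm r rho K N P Z : 0 <= r -> 0 <= rho ->
  (forall a, (a < n)%nat -> wnorm n r K (Z a) <= rho) ->
  wnorm n r K (tcomp n N P Z) <= wnorm n rho N P.
Proof.
  intros Hr Hrho HZ. revert P; induction N; intros; simpl tcomp.
  - rewrite wnorm_sscale_sone. simpl. lra.
  - eapply Rle_trans. apply wnorm_add; auto. rewrite wnorm_sscale_sone.
    simpl wnorm at 2. apply Rplus_le_compat_l.
    eapply Rle_trans. apply wnorm_sumS; auto.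
    rewrite <- sumR_scale. apply sumR_le; intros a Ha. apply in_seq in Ha.
    eapply Rle_trans. apply wnorm_mul; auto.
    apply Rmult_le_compat; auto using wnorm_nonneg. apply HZ; lia.
Qed.

Lemma wnorm_sum_left_mul r rho K Z D : 0 <= r ->
  (forall a, (a < n)%nat -> wnorm n r K (Z a) <= rho) ->
  wnorm n r K (sumS (seq 0 n) (fun a => smul (Z a) (D a)))
  <= rho * sumR (seq 0 n) (fun a => wnorm n r K (D a)).
Proof.
  intros Hr HZ. eapply Rle_trans. apply wnorm_sumS; auto.
  rewrite <- sumR_scale. apply sumR_le; intros a Ha. apply in_seq in Ha.
  eapply Rle_trans. apply wnorm_mul; auto.
  apply Rmult_le_compat_r. apply wnorm_nonneg; auto. apply HZ; lia.
Qed.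

(** The inductive step of the geometric tail estimates: a bound
    Bb^k x <= rho^k y on the shifted parts propagates to the next degree. *)
Lemma geometric_step Bb rho k c x y : 0 <= rho -> rho <= Bb -> 0 <= c -> 0 <= y ->
  Bb ^ k * x <= rho ^ k * y ->
  Bb ^ S k * (rho * x) <= rho ^ S k * (c + Bb * y).
Proof.
  intros Hrho HB Hc Hy Hxy. simpl.
  assert (0 <= rho ^ k) by (apply pow_le; lra).
  assert (Bb * rho * (Bb ^ k * x) <= Bb * rho * (rho ^ k * y))
    by (apply Rmult_le_compat_l; nra).
  assert (0 <= rho * rho ^ k * c) by (apply Rmult_le_pos; [apply Rmult_le_pos|]; lra).
  nra.
Qed.

(** The inductive step of the Lipschitz estimate, for one letter: F_r, F_B are
    the rho- and Bb-norms of a shifted series and D the distance of its two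
    compositions. *)
Lemma lipschitz_step Bb rho delta Fr FB D : 0 <= rho -> rho <= Bb -> 0 <= delta ->
  0 <= Fr -> Fr <= FB -> (Bb - rho) * D <= delta * (FB - Fr) ->
  (Bb - rho) * (delta * Fr + rho * D) <= delta * (Bb * FB - rho * Fr).
Proof.
  intros Hrho HB Hd HFr HF HD.
  assert (rho * ((Bb - rho) * D) <= rho * (delta * (FB - Fr)))
    by (apply Rmult_le_compat_l; lra).
  assert (0 <= delta * ((Bb - rho) * (FB - Fr)))
    by (apply Rmult_le_pos; [lra| apply Rmult_le_pos; lra]).
  nra.
Qed.

(** The homogeneous part of degree N of P(Z). *)
Definition tlayer (N : nat) (P : ncseries) (Z : nat -> ncseries) : ncseries :=
  match N with
  | O => tcomp n 0 P Z
  | S N' => ssub (tcomp n N P Z) (tcomp n N' P Z)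
  end.

Lemma tlayer_S N P Z :
  tlayer (S N) P Z = sumS (seq 0 n) (fun a => smul (Z a) (tlayer N (shift a P) Z)).
Proof.
  destruct N; cbn [tlayer].
  - simpl tcomp. sext. unfold ssub, sadd. ring.
  - change (tcomp n (S (S N)) P Z) with (sadd (sscale (P []) sone)
      (sumS (seq 0 n) (fun a => smul (Z a) (tcomp n (S N) (shift a P) Z)))).
    change (tcomp n (S N) P Z) with (sadd (sscale (P []) sone)
      (sumS (seq 0 n) (fun a => smul (Z a) (tcomp n N (shift a P) Z)))).
    rewrite (sumS_ext _ (fun a => smul (Z a) (ssub _ _))
      (fun a => ssub (smul (Z a) (tcomp n (S N) (shift a P) Z))
                     (smul (Z a) (tcomp n N (shift a P) Z)))).
    + rewrite sumS_sub. sext. unfold ssub, sadd. ring.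
    + intros; apply smul_subr.
Qed.

Lemma tlayer_bound r rho Bb K N P Z : 0 <= r -> 0 <= rho -> rho <= Bb ->
  (forall a, (a < n)%nat -> wnorm n r K (Z a) <= rho) ->
  Bb ^ N * wnorm n r K (tlayer N P Z) <= rho ^ N * wnorm n Bb N P.
Proof.
  intros Hr Hrho HB HZ. revert P; induction N; intros.
  - simpl. rewrite wnorm_sscale_sone. lra.
  - rewrite tlayer_S.
    eapply Rle_trans. apply Rmult_le_compat_l. apply pow_le; lra.
    apply (wnorm_sum_left_mul r rho); auto.
    simpl (wnorm n Bb (S N) P).
    apply geometric_step; auto using Cmod_ge0.
    + apply wnorm_shifts_nonneg; lra.
    + rewrite <- !sumR_scale. apply sumR_le; intros. apply IHN.
Qed.

Lemma tcomp_S_diff N P Z Z' :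
  ssub (tcomp n (S N) P Z) (tcomp n (S N) P Z') =
  sumS (seq 0 n) (fun a => sadd (smul (ssub (Z a) (Z' a)) (tcomp n N (shift a P) Z))
                   (smul (Z' a) (ssub (tcomp n N (shift a P) Z) (tcomp n N (shift a P) Z')))).
Proof.
  simpl tcomp.
  transitivity (ssub (sumS (seq 0 n) (fun a => smul (Z a) (tcomp n N (shift a P) Z)))
                     (sumS (seq 0 n) (fun a => smul (Z' a) (tcomp n N (shift a P) Z')))).
  - sext. unfold sadd, ssub. ring.
  - rewrite <- sumS_sub. apply sumS_ext; intros.
    rewrite smul_subl, smul_subr. sext. unfold sadd, ssub. ring.
Qed.

Lemma tcomp_lip r rho Bb K N P Z Z' delta : 0 <= r -> 0 <= rho -> rho <= Bb -> 0 <= delta ->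
  (forall a, (a < n)%nat -> wnorm n r K (Z a) <= rho /\ wnorm n r K (Z' a) <= rho /\
                           wnorm n r K (ssub (Z a) (Z' a)) <= delta) ->
  (Bb - rho) * wnorm n r K (ssub (tcomp n N P Z) (tcomp n N P Z'))
  <= delta * (wnorm n Bb N P - wnorm n rho N P).
Proof.
  intros Hr Hrho HB Hd HZ. revert P; induction N; intros.
  - simpl tcomp. replace (ssub (sscale (P []) sone) (sscale (P []) sone)) with szero
      by (sext; unfold ssub, sscale, szero; ring).
    rewrite wnorm_zero. simpl. lra.
  - rewrite tcomp_S_diff.
    set (F := fun t a => wnorm n t N (shift a P)).
    set (Dl := fun a => wnorm n r K (ssub (tcomp n N (shift a P) Z) (tcomp n N (shift a P) Z'))).
    assert (Hs : wnorm n r K (sumS (seq 0 n) (fun a =>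
                   sadd (smul (ssub (Z a) (Z' a)) (tcomp n N (shift a P) Z))
                        (smul (Z' a) (ssub (tcomp n N (shift a P) Z) (tcomp n N (shift a P) Z')))))
       <= sumR (seq 0 n) (fun a => delta * F rho a + rho * Dl a)).
    { unfold F, Dl. eapply Rle_trans. apply wnorm_sumS; auto.
      apply sumR_le; intros a Ha. apply in_seq in Ha.
      destruct (HZ a) as [H1 [H2 H3]]; [lia|].
      eapply Rle_trans. apply wnorm_add; auto. apply Rplus_le_compat.
      - eapply Rle_trans. apply wnorm_mul; auto.
        apply Rmult_le_compat; auto using wnorm_nonneg.
        apply tcomp_norm; auto. intros b Hb. apply HZ; auto.
      - eapply Rle_trans. apply wnorm_mul; auto.
        apply Rmult_le_compat_r; auto using wnorm_nonneg. }
    eapply Rle_trans. apply Rmult_le_compat_l. lra. apply Hs.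
    change (wnorm n Bb (S N) P - wnorm n rho (S N) P) with
      ((Cmod (P []) + Bb * sumR (seq 0 n) (F Bb)) - (Cmod (P []) + rho * sumR (seq 0 n) (F rho))).
    replace ((Cmod (P []) + Bb * sumR (seq 0 n) (F Bb)) - (Cmod (P []) + rho * sumR (seq 0 n) (F rho)))
      with (sumR (seq 0 n) (fun a => Bb * F Bb a - rho * F rho a))
      by (rewrite sumR_sub, !sumR_scale; ring).
    rewrite <- !sumR_scale. apply sumR_le; intros a Ha.
    apply lipschitz_step; auto.
    + apply wnorm_nonneg; auto.
    + apply wnorm_mono_r; auto.
    + apply IHN.
Qed.

(** [tcomp N P Xgen] is the truncation of P at degree N. *)
Lemma tcomp_X_nil N P : tcomp n N P Xgen [] = P [].
Proof.
  destruct N; simpl; unfold sscale, sadd; simpl.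
  - ring.
  - assert (Hl : forall l, sumS l (fun a => smul (Xgen a) (tcomp n N (shift a P) Xgen)) [] = Defs.C0).
    { induction l; simpl; auto. unfold sadd. rewrite IHl, smul_nil. unfold Xgen; simpl. ring. }
    rewrite Hl. ring.
Qed.

Lemma shift_tcomp_X a N P : (a < n)%nat ->
  shift a (tcomp n (S N) P Xgen) = tcomp n N (shift a P) Xgen.
Proof.
  intros Ha. simpl tcomp. rewrite shift_sadd, shift_sscale, shift_sone, shift_sumS.
  rewrite (sumS_ext _ _ (fun b => if Nat.eq_dec b a then tcomp n N (shift b P) Xgen else szero)).
  - rewrite sumS_delta by auto. sext. unfold sadd, sscale, szero. ring.
  - intros b Hb. rewrite shift_smul, shift_Xgen. unfold Xgen at 1. simpl.
    destruct (Nat.eq_dec a b); destruct (Nat.eq_dec b a); try lia; subst.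
    + rewrite smul_onel. sext. unfold sadd, sscale. ring.
    + rewrite smul_zerol. sext. unfold sadd, sscale, szero. ring.
Qed.

Lemma trunc_bound r Bb K N P : 0 <= r -> r <= Bb ->
  Bb ^ (S N) * wnorm n r K (ssub P (tcomp n N P Xgen)) <= r ^ (S N) * wnorm n Bb K P.
Proof.
  intros Hr HB. revert N P; induction K; intros N P.
  - simpl wnorm. unfold ssub. rewrite tcomp_X_nil.
    replace (Csub (P []) (P [])) with Defs.C0 by ring. rewrite Cmod_C0, Rmult_0_r.
    apply Rmult_le_pos. apply pow_le; lra. apply Cmod_ge0.
  - change (wnorm n r (S K) (ssub P (tcomp n N P Xgen))) with
      (Cmod (ssub P (tcomp n N P Xgen) [])
       + r * sumR (seq 0 n) (fun a => wnorm n r K (shift a (ssub P (tcomp n N P Xgen))))).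
    unfold ssub at 1. rewrite tcomp_X_nil.
    replace (Csub (P []) (P [])) with Defs.C0 by ring. rewrite Cmod_C0, Rplus_0_l.
    simpl (wnorm n Bb (S K) P).
    apply geometric_step; auto using Cmod_ge0.
    { apply wnorm_shifts_nonneg; lra. }
    rewrite <- !sumR_scale. apply sumR_le; intros a Ha. apply in_seq in Ha.
    destruct N.
    + replace (shift a (ssub P (tcomp n 0 P Xgen))) with (shift a P)
        by (sext; unfold shift, ssub; simpl tcomp; unfold sscale, sone; ring).
      simpl. rewrite !Rmult_1_l. apply wnorm_mono_r; auto.
    + rewrite shift_ssub, shift_tcomp_X by lia. apply IHK.
Qed.

End Estimates.

Section Support.
Variable n : nat.

Definition supp (P : ncseries) : Prop :=
  forall w, in_alphabet n w = false -> P w = Defs.C0.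

Lemma supp_shift a P : supp P -> supp (shift a P).
Proof.
  unfold supp, shift; intros H v Hv. apply H. simpl. rewrite Hv.
  destruct (Nat.ltb a n); auto.
Qed.

Lemma supp_smul P Q : supp P -> supp Q -> supp (smul P Q).
Proof.
  intros HP HQ w. revert P HP. induction w; intros P HP Hg.
  - simpl in Hg. discriminate.
  - rewrite smul_cons. rewrite HQ by auto. simpl in Hg.
    destruct (Nat.ltb a n) eqn:E.
    + simpl in Hg. rewrite IHw; auto. ring. apply supp_shift; auto.
    + replace (shift a P) with szero.
      * rewrite smul_zerol. unfold szero. ring.
      * sext. unfold szero, shift. symmetry. apply HP. simpl. rewrite E. auto.
Qed.

Lemma supp_sadd P Q : supp P -> supp Q -> supp (sadd P Q).
Proof. unfold supp, sadd; intros. rewrite H, H0 by auto. ring. Qed.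
Lemma supp_sscale_sone c : supp (sscale c sone).
Proof. unfold supp, sscale, sone; intros. destruct w. discriminate. ring. Qed.
Lemma supp_sumS l F : (forall a, In a l -> supp (F a)) -> supp (sumS l F).
Proof. induction l; simpl; intros. unfold supp, szero; auto. apply supp_sadd; auto. Qed.
Lemma supp_Xgen j : (j < n)%nat -> supp (Xgen j).
Proof.
  unfold supp, Xgen; intros. destruct (list_eq_dec Nat.eq_dec w [j]); auto.
  subst. simpl in H0. apply Nat.ltb_lt in H. rewrite H in H0. discriminate.
Qed.

Lemma supp_tcomp N P Z : (forall a, (a < n)%nat -> supp (Z a)) -> supp (tcomp n N P Z).
Proof.
  intros HZ; revert P; induction N; intros; simpl.
  - apply supp_sscale_sone.
  - apply supp_sadd. apply supp_sscale_sone. apply supp_sumS; intros.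
    apply in_seq in H. apply supp_smul; auto. apply HZ; lia.
Qed.

Lemma Csum_cons x l : Csum (x :: l) = Cadd x (Csum l).
Proof. reflexivity. Qed.

Lemma Csum_app l1 l2 : Csum (l1 ++ l2) = Cadd (Csum l1) (Csum l2).
Proof. induction l1; simpl. ring. rewrite IHl1. ring. Qed.

Lemma Csum_map_add {T} (f g : T -> Cplx) l :
  Csum (map (fun x => Cadd (f x) (g x)) l) = Cadd (Csum (map f l)) (Csum (map g l)).
Proof. induction l; simpl. ring. rewrite IHl. ring. Qed.

Lemma Csum_map_zero {T} (l : list T) : Csum (map (fun _ => Defs.C0) l) = Defs.C0.
Proof. induction l; simpl. ring. rewrite IHl. ring. Qed.

Lemma Csum_swap {T U} (F : T -> U -> Cplx) l1 l2 :
  Csum (map (fun a => Csum (map (fun k => F a k) l2)) l1) =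
  Csum (map (fun k => Csum (map (fun a => F a k) l1)) l2).
Proof.
  induction l1; simpl. symmetry. apply Csum_map_zero.
  rewrite IHl1, <- Csum_map_add. reflexivity.
Qed.

Lemma smul_Csum {T} (P : ncseries) (F : T -> ncseries) l :
  smul P (fun w => Csum (map (fun x => F x w) l))
  = fun w => Csum (map (fun x => smul P (F x) w) l).
Proof.
  induction l; simpl.
  - change (fun _ : list nat => Defs.C0) with szero. rewrite smul_zeror. reflexivity.
  - change (fun w => Cadd (F a w) (Csum (map (fun x => F x w) l))) with
      (sadd (F a) (fun w => Csum (map (fun x => F x w) l))).
    rewrite smul_addr, IHl. reflexivity.
Qed.

Lemma sumS_Csum l F w : sumS l F w = Csum (map (fun a => F a w) l).
Proof. induction l; simpl; auto. unfold sadd. rewrite IHl. reflexivity. Qed.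

Section Evaluation.
Variable Y : nat -> ncseries.

Definition hom_comp (k : nat) (G : ncseries) : ncseries :=
  fun w => Csum (map (fun q => Cmul (G q) (mono_eval Y q w)) (words n k)).

Lemma hom_comp_S k G :
  hom_comp (S k) G = sumS (seq 0 n) (fun a => smul (Y a) (hom_comp k (shift a G))).
Proof.
  sext. rewrite sumS_Csum. unfold hom_comp at 1. simpl words.
  transitivity (Csum (map (fun a => Csum (map (fun q => Cmul (G q) (mono_eval Y q w))
                  (map (cons a) (words n k)))) (seq 0 n))).
  { generalize (seq 0 n). induction l; simpl; auto. rewrite map_app, Csum_app, IHl. reflexivity. }
  f_equal. apply map_ext; intro a. unfold hom_comp.
  rewrite (smul_Csum (Y a) (fun q => sscale (shift a G q) (mono_eval Y q))).
  rewrite map_map. f_equal. apply map_ext; intro q. simpl. rewrite smul_scaler. reflexivity.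
Qed.

Lemma tcomp_eval K G w : tcomp n K G Y w = eval_partial n G Y w K.
Proof.
  unfold eval_partial. revert G w; induction K; intros.
  - simpl. unfold hom_comp, sscale. simpl. ring.
  - change (seq 0 (S (S K))) with (0%nat :: seq 1 (S K)).
    rewrite <- seq_shift, map_cons, map_map.
    simpl tcomp. unfold sadd at 1.
    rewrite Csum_cons. f_equal. { simpl. unfold sscale. ring. }
    change (fun k => Csum (map (fun q => Cmul (G q) (mono_eval Y q w)) (words n (S k))))
      with (fun k => hom_comp (S k) G w).
    rewrite sumS_Csum.
    rewrite (map_ext _ (fun a => Csum (map (fun k => smul (Y a) (hom_comp k (shift a G)) w)
                                          (seq 0 (S K))))).
    + rewrite Csum_swap. f_equal. apply map_ext; intro k. rewrite hom_comp_S, sumS_Csum.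
      reflexivity.
    + intros a.
      replace (tcomp n K (shift a G) Y)
        with (fun w => Csum (map (fun k => hom_comp k (shift a G) w) (seq 0 (S K))))
        by (sext; rewrite IHK; reflexivity).
      rewrite smul_Csum. reflexivity.
Qed.

End Evaluation.

Lemma Un_cv_const c : Un_cv (fun _ => c) c.
Proof. intros e He. exists 0%nat. intros. unfold R_dist. rewrite Rminus_diag, Rabs_R0. auto. Qed.

Lemma Un_cv_le u l m c : Un_cv u l -> (forall p, (p >= m)%nat -> u p <= c) -> l <= c.
Proof.
  intros Hu Hc. destruct (Rle_dec l c) as [|Hn]; auto. exfalso.
  destruct (Hu (l - c)) as [N HN]. lra.
  specialize (HN (max N m) ltac:(lia)). specialize (Hc (max N m) ltac:(lia)).
  unfold R_dist in HN. apply Rabs_def2 in HN. lra.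
Qed.

Lemma Un_cv_Cmod u l : Un_cv (fun p => Cmod (Csub (u p) l)) 0 -> Un_cv (fun p => Cmod (u p)) (Cmod l).
Proof.
  intros H e He. destruct (H e He) as [N HN]. exists N. intros p Hp.
  specialize (HN p Hp). unfold R_dist in *.
  rewrite Rminus_0_r, Rabs_right in HN by (apply Rle_ge, Cmod_ge0).
  eapply Rle_lt_trans. apply Cmod_diff. auto.
Qed.

Lemma Un_cv_sumR l (F : nat -> nat -> R) G :
  (forall a, In a l -> Un_cv (fun p => F p a) (G a)) -> Un_cv (fun p => sumR l (F p)) (sumR l G).
Proof. induction l; simpl; intros. apply Un_cv_const. apply CV_plus; auto. Qed.

(** Coefficientwise convergence on the alphabet implies convergence of each
    truncated norm (a finite sum of moduli of coefficients). *)
Lemma wnorm_cv r K (Q : nat -> ncseries) L :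
  (forall w, in_alphabet n w = true -> Un_cv (fun p => Cmod (Csub (Q p w) (L w))) 0) ->
  Un_cv (fun p => wnorm n r K (Q p)) (wnorm n r K L).
Proof.
  revert Q L; induction K; intros Q L H; simpl.
  - apply Un_cv_Cmod. apply H. reflexivity.
  - apply CV_plus. apply Un_cv_Cmod, H. reflexivity.
    apply CV_mult. apply Un_cv_const.
    apply (Un_cv_sumR _ (fun p a => wnorm n r K (shift a (Q p)))). intros a Ha. apply in_seq in Ha.
    apply IHK. intros w Hw. unfold shift. apply H. simpl. rewrite Hw.
    apply andb_true_intro; split; auto. apply Nat.ltb_lt; lia.
Qed.

Lemma series_limit r M th (S : nat -> ncseries) : 1 <= r -> 0 < M -> 0 <= th < 1 ->
  (forall m p K, (m <= p)%nat -> wnorm n r K (ssub (S p) (S m)) <= M * th ^ m) ->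
  {L : ncseries | supp L /\ forall m K, wnorm n r K (ssub L (S m)) <= M * th ^ m}.
Proof.
  intros Hr HM Hth HS.
  assert (Hcoef : forall w, {z : Cplx | in_alphabet n w = true -> Ccv (fun p => S p w) z}).
  { intros w. destruct (in_alphabet n w) eqn:Ew; [|exists Defs.C0; discriminate].
    destruct (Ccv_geometric_cauchy (fun p => S p w) M th) as [z Hz]; auto.
    - intros m p Hmp. eapply Rle_trans; [|apply (HS m p (length w) Hmp)].
      apply (wnorm_coef n r (length w) (ssub (S p) (S m)) w); auto.
    - exists z. auto. }
  exists (fun w => if in_alphabet n w then proj1_sig (Hcoef w) else Defs.C0). split.
  - intros w Hw. destruct (Hcoef w) as [z Hz]. simpl. rewrite Hw. reflexivity.
  - intros m K.
    apply (Un_cv_le (fun p => wnorm n r K (ssub (S p) (S m))) _ m).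
    + apply wnorm_cv. intros w Hw. unfold ssub.
      destruct (Hcoef w) as [z Hz]. simpl. rewrite Hw.
      replace (fun p => Cmod (Csub (Csub (S p w) (S m w)) (Csub z (S m w))))
        with (fun p => Cmod (Csub (S p w) z))
        by (apply functional_extensionality; intro p; f_equal; ring).
      apply Hz; auto.
    + intros p Hp. apply HS; auto.
Qed.

End Support.

(** ** The inverse series *)

Fixpoint approx_deg (m : nat) : nat :=
  match m with O => 1%nat | S m' => S (approx_deg m' + m' * approx_deg m') end.

(** The error recursion contracts by theta: a truncation error of size
    (rho/B)^(k+1) C plus a propagated error (4 C theta^k) C / (B - rho) is at
    most 4 C theta^(k+1), as 2 C = B - rho and rho / B <= theta, 3/4 <= theta. *)
Lemma contraction_step B rho C th k N1 N2 : 0 < B -> 0 < rho -> rho < B -> 2 * C = B - rho ->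
  3/4 <= th -> rho / B <= th -> 0 <= N2 ->
  B ^ (S k) * N1 <= rho ^ (S k) * C ->
  (B - rho) * N2 <= (4 * C * th ^ k) * C ->
  N1 + N2 <= 4 * C * th ^ (S k).
Proof.
  intros HB Hr HrB HC Hth Hx HN2 H1 H2.
  assert (HC0 : 0 < C) by lra.
  set (x := rho / B) in *.
  assert (Hx0 : 0 < x) by (unfold x; apply Rdiv_lt_0_compat; lra).
  assert (Hrho : rho = x * B) by (unfold x; field; lra).
  rewrite Hrho, Rpow_mult_distr in H1.
  assert (HBk : 0 < B ^ S k) by (apply pow_lt; lra).
  assert (HN1 : N1 <= x ^ S k * C) by (apply (Rmult_le_reg_l (B ^ S k)); auto; nra).
  assert (x ^ S k <= th ^ S k) by (apply pow_incr; lra).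
  assert (HN2' : N2 <= 2 * C * th ^ k).
  { apply (Rmult_le_reg_l (B - rho)). lra. rewrite <- HC. rewrite <- HC in H2.
    replace (2 * C * (2 * C * th ^ k)) with (4 * C * th ^ k * C) by ring. lra. }
  assert (0 <= th ^ k) by (apply pow_le; lra).
  simpl (th ^ S k) in *.
  assert (2 * th ^ k <= 3 * (th * th ^ k)) by nra.
  nra.
Qed.

Section Inversion.
Variables (n : nat) (f : nat -> ncseries) (A' A B : R).
Hypothesis HA' : 1 < A'.
Hypothesis HA'A : A' < A.
Hypothesis HAB : A < B.

Let C := (B - A) / 4.
Hypothesis Hf_norm : forall j K, (j < n)%nat -> wnorm n B K (f j) <= C.
Hypothesis Hf_supp : forall j, (j < n)%nat -> supp n (f j).
Hypothesis HY_norm : forall j K, (j < n)%nat -> wnorm n A' K (sadd (Xgen j) (f j)) <= A.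

Let rho := (A + B) / 2.
Let th := (3 + rho / B) / 4.
Let M := 4 * C / (1 - th).
Let Y := fun i => sadd (Xgen i) (f i).

Lemma rho_facts : A + C <= rho /\ 2 * C = B - rho /\ 0 < C /\ A' <= rho /\ rho < B.
Proof. unfold rho, C; repeat split; lra. Qed.

Lemma th_facts : 3/4 <= th /\ th < 1 /\ rho / B <= th /\ 0 < th.
Proof.
  assert (0 < rho / B /\ rho / B < 1).
  { unfold rho; split. apply Rdiv_lt_0_compat; lra.
    apply (Rmult_lt_reg_r B). lra. field_simplify; lra. }
  unfold th; repeat split; lra.
Qed.

Fixpoint approx_inv (m : nat) : nat -> ncseries :=
  match m with
  | O => Xgen
  | S m' => fun j => ssub (Xgen j) (tcomp n m' (f j) (approx_inv m'))
  end.

Lemma approx_inv_deg m a : (a < n)%nat -> deg_le (approx_deg m) (approx_inv m a).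
Proof.
  revert a; induction m; intros a Ha; simpl.
  - apply deg_le_Xgen.
  - apply deg_le_sub.
    + apply (deg_le_mono 1). lia. apply deg_le_Xgen.
    + apply (deg_le_mono (m * approx_deg m)). lia. apply deg_le_tcomp. auto.
Qed.

Lemma approx_inv_bound m a K : (a < n)%nat -> wnorm n A K (approx_inv m a) <= rho.
Proof.
  destruct rho_facts as [H1 [H2 [H3 [H4 H5]]]].
  revert a; induction m; intros a Ha; simpl.
  - eapply Rle_trans. apply wnorm_Xgen; auto; lra. lra.
  - eapply Rle_trans. apply wnorm_sub; lra.
    assert (wnorm n A K (Xgen a) <= A) by (apply wnorm_Xgen; auto; lra).
    assert (wnorm n A K (tcomp n m (f a) (approx_inv m)) <= wnorm n rho m (f a))
      by (apply tcomp_norm; try lra; intros; apply IHm; auto).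
    assert (wnorm n rho m (f a) <= wnorm n B m (f a)) by (apply wnorm_mono_r; lra).
    specialize (Hf_norm a m Ha). lra.
Qed.

Lemma approx_inv_step m a K : (a < n)%nat ->
  wnorm n A K (ssub (approx_inv (S m) a) (approx_inv m a)) <= 4 * C * th ^ m.
Proof.
  destruct rho_facts as [H1 [H2 [H3 [H4 H5]]]]. destruct th_facts as [T1 [T2 [T3 T4]]].
  revert a K; induction m; intros a K Ha.
  - cbn [approx_inv].
    replace (ssub (ssub (Xgen a) (tcomp n 0 (f a) Xgen)) (Xgen a)) with
      (ssub szero (tcomp n 0 (f a) Xgen)) by (sext; unfold ssub, szero; ring).
    eapply Rle_trans. apply wnorm_sub; lra. rewrite wnorm_zero.
    assert (wnorm n A K (tcomp n 0 (f a) Xgen) <= wnorm n B 0 (f a)).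
    { apply tcomp_norm; try lra. intros; eapply Rle_trans. apply wnorm_Xgen; auto; lra. lra. }
    specialize (Hf_norm a 0%nat Ha). change (th ^ 0) with 1. lra.
  - change (approx_inv (S (S m)) a) with
      (ssub (Xgen a) (tcomp n (S m) (f a) (approx_inv (S m)))).
    change (approx_inv (S m) a) with (ssub (Xgen a) (tcomp n m (f a) (approx_inv m))).
    replace (ssub (ssub (Xgen a) (tcomp n (S m) (f a) (approx_inv (S m))))
                  (ssub (Xgen a) (tcomp n m (f a) (approx_inv m))))
      with (ssub (tcomp n m (f a) (approx_inv m)) (tcomp n (S m) (f a) (approx_inv (S m))))
      by (sext; unfold ssub; ring).
    eapply Rle_trans. apply (wnorm_tri n A K _ (tcomp n (S m) (f a) (approx_inv m))). lra.
    assert (0 <= th ^ m) by (apply pow_le; lra).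
    apply (contraction_step B rho); try lra.
    + apply wnorm_nonneg; lra.
    + rewrite wnorm_sub_sym. eapply Rle_trans.
      apply (tlayer_bound n A rho B K (S m) (f a) (approx_inv m)); try lra.
      intros; apply approx_inv_bound; auto.
      apply Rmult_le_compat_l. apply pow_le; lra. apply Hf_norm; auto.
    + eapply Rle_trans. apply tcomp_lip with (rho := rho) (delta := 4 * C * th ^ m); try lra.
      * nra.
      * intros b Hb. split; [|split]; try apply approx_inv_bound; auto.
        rewrite wnorm_sub_sym. apply IHm; auto.
      * apply Rmult_le_compat_l. nra.
        assert (0 <= wnorm n rho (S m) (f a)) by (apply wnorm_nonneg; lra).
        specialize (Hf_norm a (S m) Ha). lra.
Qed.

Lemma approx_inv_cauchy m p a K : (a < n)%nat -> (m <= p)%nat ->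
  wnorm n A K (ssub (approx_inv p a) (approx_inv m a)) <= M * th ^ m.
Proof.
  destruct rho_facts as [_ [_ [HC _]]]. destruct th_facts as [T1 [T2 [T3 T4]]].
  intros Ha Hp.
  assert (Htele : forall k, wnorm n A K (ssub (approx_inv (m + k) a) (approx_inv m a))
                            <= M * (th ^ m - th ^ (m + k))).
  { induction k.
    - rewrite Nat.add_0_r.
      replace (ssub (approx_inv m a) (approx_inv m a)) with szero
        by (sext; unfold ssub, szero; ring).
      rewrite wnorm_zero. lra.
    - eapply Rle_trans. apply (wnorm_tri n A K _ (approx_inv (m + k) a)). lra.
      rewrite Nat.add_succ_r. pose proof (approx_inv_step (m + k) a K Ha).
      replace (M * (th ^ m - th ^ S (m + k)))
        with (M * (th ^ m - th ^ (m + k)) + 4 * C * th ^ (m + k))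
        by (unfold M; simpl; field; lra).
      lra. }
  replace p with (m + (p - m))%nat by lia.
  eapply Rle_trans. apply Htele.
  assert (0 <= th ^ (m + (p - m))) by (apply pow_le; lra).
  assert (0 <= M) by (unfold M; apply Rmult_le_pos; [lra| apply Rlt_le, Rinv_0_lt_compat; lra]).
  nra.
Qed.

(** H_m := G_m(Y), computed exactly since G_m is a polynomial. *)
Definition approx_Y (m : nat) (a : nat) : ncseries :=
  tcomp n (approx_deg m) (approx_inv m a) Y.

Lemma approx_Y_stab m a D : (a < n)%nat -> (approx_deg m <= D)%nat ->
  tcomp n D (approx_inv m a) Y = approx_Y m a.
Proof.
  intros. unfold approx_Y. apply tcomp_stab with (d := approx_deg m); auto.
  apply approx_inv_deg; auto.
Qed.

(** By associativity of composition, H_{m+1} = Y - f(H_m). *)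
Lemma approx_Y_S m a : (a < n)%nat ->
  approx_Y (S m) a = ssub (Y a) (tcomp n m (f a) (approx_Y m)).
Proof.
  intros Ha. unfold approx_Y at 1.
  change (approx_inv (S m) a) with (ssub (Xgen a) (tcomp n m (f a) (approx_inv m))).
  change (approx_deg (S m)) with (S (approx_deg m + m * approx_deg m)).
  rewrite tcomp_sub, tcomp_Xgen by auto. f_equal.
  rewrite (tcomp_assoc n Y m (f a) (approx_inv m) (approx_deg m)).
  - apply tcomp_ext_Z. intros b Hb. apply approx_Y_stab; auto. lia.
  - intros; apply approx_inv_deg; auto.
  - lia.
Qed.

Lemma approx_Y_bound m a K : (a < n)%nat -> wnorm n A' K (approx_Y m a) <= rho.
Proof.
  intros Ha. unfold approx_Y. eapply Rle_trans. apply tcomp_norm with (rho := A); try lra.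
  - intros; apply HY_norm; auto.
  - apply approx_inv_bound; auto.
Qed.

(** H_m approaches X: ||H_m - X||_{A'} <= 4 C theta^m, since X solves
    X = Y - f(X) and f is a contraction near X. *)
Lemma approx_Y_err m a K : (a < n)%nat ->
  wnorm n A' K (ssub (approx_Y m a) (Xgen a)) <= 4 * C * th ^ m.
Proof.
  destruct rho_facts as [H1 [H2 [H3 [H4 H5]]]]. destruct th_facts as [T1 [T2 [T3 T4]]].
  revert a K; induction m; intros a K Ha.
  - unfold approx_Y. cbn [approx_deg approx_inv]. rewrite tcomp_Xgen by auto.
    replace (ssub (Y a) (Xgen a)) with (f a) by (sext; unfold Y, ssub, sadd; ring).
    eapply Rle_trans. apply wnorm_mono_r with (r' := B); lra.
    specialize (Hf_norm a K Ha). simpl. lra.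
  - rewrite approx_Y_S by auto.
    replace (ssub (ssub (Y a) (tcomp n m (f a) (approx_Y m))) (Xgen a)) with
      (sadd (ssub (f a) (tcomp n m (f a) Xgen))
            (ssub (tcomp n m (f a) Xgen) (tcomp n m (f a) (approx_Y m))))
      by (sext; unfold Y, ssub, sadd; ring).
    eapply Rle_trans. apply wnorm_add; lra.
    assert (0 <= th ^ m) by (apply pow_le; lra).
    apply (contraction_step B rho); try lra.
    + apply wnorm_nonneg; lra.
    + eapply Rle_trans. apply trunc_bound; lra.
      apply Rle_trans with (rho ^ S m * wnorm n B K (f a)).
      * apply Rmult_le_compat_r. apply wnorm_nonneg; lra. apply pow_incr; lra.
      * apply Rmult_le_compat_l. apply pow_le; lra. apply Hf_norm; auto.
    + eapply Rle_trans. apply tcomp_lip with (rho := rho) (delta := 4 * C * th ^ m); try lra.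
      * nra.
      * intros b Hb. split; [|split].
        -- eapply Rle_trans. apply wnorm_Xgen; auto; lra. lra.
        -- apply approx_Y_bound; auto.
        -- rewrite wnorm_sub_sym. apply IHm; auto.
      * apply Rmult_le_compat_l. nra.
        assert (0 <= wnorm n rho m (f a)) by (apply wnorm_nonneg; lra).
        specialize (Hf_norm a m Ha). lra.
Qed.

Lemma inverse_limit : exists G : nat -> ncseries,
  forall a, (a < n)%nat ->
    supp n (G a) /\ forall m K, wnorm n A K (ssub (G a) (approx_inv m a)) <= M * th ^ m.
Proof.
  destruct rho_facts as [_ [_ [HC _]]]. destruct th_facts as [T1 [T2 [T3 T4]]].
  assert (HM : 0 < M) by (unfold M; apply Rmult_lt_0_compat; [lra| apply Rinv_0_lt_compat; lra]).
  assert (Hlim : forall a, {L : ncseries | (a < n)%nat -> supp n L /\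
            forall m K, wnorm n A K (ssub L (approx_inv m a)) <= M * th ^ m}).
  { intros a. destruct (lt_dec a n) as [Ha|Ha]; [|exists szero; lia].
    destruct (series_limit n A M th (fun m => approx_inv m a)) as [L HL]; try lra.
    - intros m p K Hmp. apply approx_inv_cauchy; auto.
    - exists L. auto. }
  exists (fun a => proj1_sig (Hlim a)). intros a Ha. destruct (Hlim a) as [L HL]. auto.
Qed.

(** G(Y) = X coefficientwise: G(Y) - X = (G - G_m)(Y) + (H_m - X), where both
    terms are O(theta^m) once the truncation degree exceeds that of G_m. *)
Lemma inverse_eval (G : nat -> ncseries) j w : (j < n)%nat ->
  (forall a, (a < n)%nat ->
     supp n (G a) /\ forall m K, wnorm n A K (ssub (G a) (approx_inv m a)) <= M * th ^ m) ->
  Ccv (eval_partial n (G j) Y w) (Xgen j w).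
Proof.
  destruct rho_facts as [_ [_ [HC _]]]. destruct th_facts as [T1 [T2 [T3 T4]]].
  intros Hj HG.
  assert (HM : 0 < M) by (unfold M; apply Rmult_lt_0_compat; [lra| apply Rinv_0_lt_compat; lra]).
  apply (Ccv_geometric_bound _ _ (M + 4 * C) th); try lra.
  intros m. exists (approx_deg m). intros K HK. rewrite <- tcomp_eval.
  assert (0 <= th ^ m) by (apply pow_le; lra).
  destruct (in_alphabet n w) eqn:Ew.
  - replace (Csub (tcomp n K (G j) Y w) (Xgen j w)) with
      (Cadd (tcomp n K (ssub (G j) (approx_inv m j)) Y w) (Csub (approx_Y m j w) (Xgen j w)))
      by (rewrite tcomp_sub, <- (approx_Y_stab m j K) by (auto; lia); unfold ssub; ring).
    eapply Rle_trans. apply Cmod_add.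
    assert (Cmod (tcomp n K (ssub (G j) (approx_inv m j)) Y w) <= M * th ^ m).
    { eapply Rle_trans. apply (wnorm_coef n A' (length w)); auto; lra.
      eapply Rle_trans. apply tcomp_norm with (rho := A); try lra.
      - intros; apply HY_norm; auto.
      - apply HG; auto. }
    assert (Cmod (Csub (approx_Y m j w) (Xgen j w)) <= 4 * C * th ^ m).
    { eapply Rle_trans.
      apply (wnorm_coef n A' (length w) (ssub (approx_Y m j) (Xgen j))); auto; lra.
      apply approx_Y_err; auto. }
    lra.
  - assert (HYs : forall a, (a < n)%nat -> supp n (Y a))
      by (intros; apply supp_sadd; [apply supp_Xgen | apply Hf_supp]; auto).
    rewrite (supp_tcomp n K (G j) Y HYs w Ew), (supp_Xgen n j Hj w Ew).
    replace (Csub Defs.C0 Defs.C0) with Defs.C0 by ring. rewrite Cmod_C0. nra.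
Qed.

Theorem inverse_exists : exists G : nat -> ncseries,
  (forall j, (j < n)%nat -> in_alg n A (G j)) /\
  (forall j, (j < n)%nat -> forall w : list nat,
     Ccv (eval_partial n (G j) (fun i => sadd (Xgen i) (f i)) w) (Xgen j w)).
Proof.
  destruct rho_facts as [_ [_ [HC _]]].
  destruct inverse_limit as [G HG].
  exists G. split.
  - intros j Hj. destruct (HG j Hj) as [Hsupp Hdist]. split.
    + intros w Hw. apply Hsupp. destruct (in_alphabet n w) eqn:E; auto.
      exfalso. apply Hw. apply in_alphabet_Forall; auto.
    + exists (M + rho). intros K. rewrite norm_partial_wnorm.
      replace (G j) with (sadd (ssub (G j) (approx_inv 0 j)) (approx_inv 0 j))
        by (sext; unfold sadd, ssub; ring).
      eapply Rle_trans. apply wnorm_add; lra.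
      pose proof (Hdist 0%nat K). pose proof (approx_inv_bound 0 j K Hj).
      simpl pow in *. lra.
  - intros j Hj w. apply (inverse_eval G); auto.
Qed.

End Inversion.

Theorem mainTheorem2 :
  forall A' A B : R, 1 < A' -> A' < A -> A < B ->
  exists C : R, 0 < C /\
  forall (n : nat) (f : nat -> ncseries),
    (forall j, (j < n)%nat -> in_alg n B (f j) /\ norm_lt n B (f j) C) ->
    (forall j, (j < n)%nat -> norm_le n A' (sadd (Xgen j) (f j)) A) ->
    exists G : nat -> ncseries,
      (forall j, (j < n)%nat -> in_alg n A (G j)) /\
      (forall j, (j < n)%nat -> forall w : list nat,
         Ccv (eval_partial n (G j) (fun i => sadd (Xgen i) (f i)) w) (Xgen j w)).
Proof.
  intros A' A B HA' HA'A HAB. exists ((B - A) / 4). split; [lra|].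
  intros n f Hf HY.
  apply (inverse_exists n f A' A B); auto.
  - intros j K Hj. destruct (Hf j Hj) as [_ [c' [Hc' Hle]]]. specialize (Hle K).
    rewrite norm_partial_wnorm in Hle. lra.
  - intros j Hj w Hw. destruct (Hf j Hj) as [[Hsupp _] _]. apply Hsupp. intro HF.
    apply in_alphabet_Forall in HF. congruence.
  - intros j K Hj. rewrite <- norm_partial_wnorm. apply HY; auto.
Qed.
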